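(* For every integer $k\geq 1$, the following identity of formal power series in $q$ holds: \[ (q;q)_{\infty}\sum_{i=0}^{\infty}\frac{q^{i}}{(q;q)_i^{k+1}}=\sum_{i_1=0}^{\infty}\cdots\sum_{i_k=0}^{\infty}\frac{q^{\sum_{j=1}^k (i_j+i_j^2)+\sum_{s=2}^k \sum_{j=s}^k i_{s-1}i_j}}{\prod_{j=1}^k (q;q)_{i_j}\,(q;q)_{\sum_{s=1}^j i_s}}. \]
   Context: Notation: $(a;q)_n=\prod_{j=0}^{n-1}(1-aq^j)$ (so $(q;q)_0=1$) and $(q;q)_\infty=\prod_{j\ge 1}(1-q^j)$. *)

From mathcomp Require Import all_boot all_order all_algebra.
Set Implicit Arguments. Unset Strict Implicit. Unset Printing Implicit Defensive.
Import Order.TTheory GRing.Theory Num.Theory.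
Local Open Scope ring_scope.

Definition fps := nat -> rat.

Definition fps_one : fps := fun n => if n == 0%N then 1 else 0.
Definition fps_Xn (m : nat) : fps := fun n => if n == m then 1 else 0.
Definition fps_sub (f g : fps) : fps := fun n => f n - g n.
Definition fps_mul (f g : fps) : fps :=
  fun n => \sum_(i < n.+1) f i * g (n - i)%N.
Fixpoint fps_pow (f : fps) (e : nat) : fps :=
  match e with 0%N => fps_one | e'.+1 => fps_mul (fps_pow f e') f end.

(* Multiplicative inverse of a series with nonzero constant term:
   g 0 = 1/f 0,  g n = -(1/f 0) * \sum_(1 <= i <= n) f i * g (n - i). *)
Fixpoint fps_inv_seq (f : fps) (n : nat) : seq rat :=
  match n with
  | 0%N => [:: (f 0%N)^-1]
  | n'.+1 => let s := fps_inv_seq f n' in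
      rcons s (- (f 0%N)^-1 * \sum_(1 <= i < n'.+2) f i * nth 0 s (n'.+1 - i)%N)
  end.
Definition fps_inv (f : fps) : fps := fun n => nth 0 (fps_inv_seq f n) n.

Definition fps_prod (s : seq fps) : fps := foldr fps_mul fps_one s.

Definition qpoch (i : nat) : fps :=
  fps_prod [seq fps_sub fps_one (fps_Xn j.+1) | j <- iota 0 i].

(* Convergence in the (q-adic) topology of formal power series:
   every coefficient is eventually constant, equal to that of L. *)
Definition fps_lim (u : nat -> fps) (L : fps) : Prop :=
  forall n, exists M, forall m, (M <= m)%N -> u m n = L n.

Definition lhs_term (k i : nat) : fps :=
  fps_mul (fps_Xn i) (fps_inv (fps_pow (qpoch i) k.+1)).

(* summand of the right-hand k-fold series; the indices i_1..i_k are
   given by a function i : nat -> nat (only i 1, ..., i k are used). *)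
Definition rhs_exp (k : nat) (i : nat -> nat) : nat :=
  (\sum_(1 <= j < k.+1) (i j + i j ^ 2)
   + \sum_(2 <= s < k.+1) \sum_(s <= j < k.+1) i s.-1 * i j)%N.

Definition rhs_term (k : nat) (i : nat -> nat) : fps :=
  fps_mul (fps_Xn (rhs_exp k i))
    (fps_inv (fps_prod [seq fps_mul (qpoch (i j)) (qpoch (\sum_(1 <= s < j.+1) i s)%N)
                       | j <- iota 1 k])).

(* a tuple (t_0,...,t_{k-1}) in [0,m)^k viewed as the 1-based index i_j = t_{j-1} *)
Definition of_ffun (k m : nat) (t : {ffun 'I_k -> 'I_m}) : nat -> nat :=
  fun j => nth 0%N [seq val (t x) | x <- enum 'I_k] j.-1.

(* Write (q)_n for (q;q)_n and compare everything modulo q^(L+1).  Generalise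
   the right-hand summand by a shift a, replacing (q)_(i_1+..+i_j) by
   (q)_(a+i_1+..+i_j) and the exponent by sum_j i_j (1 + a + i_1+..+i_j); for
   a = 0 this is the original summand.  By induction on k, the multisum over
   i_1..i_k <= L agrees modulo q^(L+1) with
     (q)_L * sum_(n <= L) q^n / ((q)_n (q)_(n+a)^k).
   For k = 0 this is the telescoping sum sum_(n <= L) q^n / (q)_n = 1 / (q)_L.
   Summing out i_1 = x reduces k+1 to k with shift a + x, and the resulting
   double sum over x and n collapses along the anti-diagonals x + n = N by the
   finite Durfee rectangle identity
     sum_m q^(m^2 + a m) / ((q)_m (q)_(m+a) (q)_(N-m)) = 1 / ((q)_N (q)_(N+a)).
   Finally (q)_L agrees with (q;q)_oo modulo q^(L+1). *)

From HB Require Import structures.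
From mathcomp Require Import all_boot all_order all_algebra.
From mathcomp Require Import boolp zify ring.
Set Implicit Arguments. Unset Strict Implicit. Unset Printing Implicit Defensive.
Import Order.TTheory GRing.Theory Num.Theory.
Local Open Scope ring_scope.

(** * The ring of formal power series *)

HB.instance Definition _ := gen_eqMixin fps.
HB.instance Definition _ := gen_choiceMixin fps.

Definition fps_zero : fps := fun _ => 0.
Definition fps_opp (f : fps) : fps := fun n => - f n.
Definition fps_add (f g : fps) : fps := fun n => f n + g n.

Lemma fps_addA : associative fps_add.
Proof. by move=> f g h; apply: funext => n; rewrite /fps_add addrA. Qed.
Lemma fps_addC : commutative fps_add.
Proof. by move=> f g; apply: funext => n; rewrite /fps_add addrC. Qed.
Lemma fps_add0 : left_id fps_zero fps_add.
Proof. by move=> f; apply: funext => n; rewrite /fps_add add0r. Qed.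
Lemma fps_addN : left_inverse fps_zero fps_opp fps_add.
Proof. by move=> f; apply: funext => n; rewrite /fps_add addNr. Qed.

HB.instance Definition _ := GRing.isZmodule.Build fps fps_addA fps_addC fps_add0 fps_addN.

Lemma fps_coef0 n : (0 : fps) n = 0. Proof. by []. Qed.
Lemma fps_coefD (f g : fps) n : (f + g) n = f n + g n. Proof. by []. Qed.
Lemma fps_coefN (f : fps) n : (- f) n = - f n. Proof. by []. Qed.

Lemma fps_coef_sum I (r : seq I) (P : pred I) (F : I -> fps) n :
  (\sum_(i <- r | P i) F i) n = \sum_(i <- r | P i) F i n.
Proof.
elim: r => [|x r IH]; first by rewrite !big_nil.
by rewrite !big_cons; case: (P x); rewrite ?fps_coefD IH.
Qed.

Lemma sum_antidiagonal (V : nmodType) n (F : nat -> nat -> V) :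
  \sum_(i < n.+1) \sum_(j < i.+1) F j (i - j)%N =
  \sum_(j < n.+1) \sum_(l < (n - j).+1) F j l.
Proof.
elim: n => [|n IH]; first by rewrite !big_ord1.
rewrite big_ord_recr /= IH [RHS]big_ord_recr /= subnn big_ord1.
rewrite [X in _ + X]big_ord_recr /= subnn addrA -big_split /=; congr (_ + _).
apply: eq_bigr => j _; have lejn : (j <= n)%N by rewrite -ltnS.
by rewrite (subSn lejn) [RHS]big_ord_recr.
Qed.

Lemma fps_mulC : commutative fps_mul.
Proof.
move=> f g; apply: funext => n; rewrite /fps_mul (reindex_inj rev_ord_inj) /=.
apply: eq_bigr => i _; have lein : (i <= n)%N by rewrite -ltnS.
by rewrite subSS mulrC subKn.
Qed.

Lemma fps_mulA : associative fps_mul.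
Proof.
move=> f g h; apply: funext => n; rewrite /fps_mul /=.
under eq_bigr => i _ do rewrite mulr_sumr.
rewrite -(@sum_antidiagonal _ n (fun j l => f j * (g l * h (n - j - l)%N))).
apply: eq_bigr => i _; rewrite mulr_suml; apply: eq_bigr => j _.
have := ltn_ord i; have := ltn_ord j; rewrite mulrA => ? ?.
by have -> : (n - j - (i - j) = n - i)%N by lia.
Qed.

Lemma fps_mul1 : left_id fps_one fps_mul.
Proof.
move=> f; apply: funext => n; rewrite /fps_mul big_ord_recl /fps_one /= mul1r subn0.
by rewrite big1 ?addr0 // => i _; rewrite mul0r.
Qed.

Lemma fps_mulDl : left_distributive fps_mul +%R.
Proof.
move=> f g h; apply: funext => n; rewrite /fps_mul fps_coefD -big_split /=.
by apply: eq_bigr => i _; rewrite fps_coefD mulrDl.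
Qed.

Lemma fps_one_neq0 : fps_one != 0.
Proof. by apply/eqP => /(congr1 (fun f : fps => f 0%N)) /eqP; rewrite oner_eq0. Qed.

HB.instance Definition _ :=
  GRing.Zmodule_isComNzRing.Build fps fps_mulA fps_mulC fps_mul1 fps_mulDl fps_one_neq0.

Lemma fps_mulE (f g : fps) : f * g = fps_mul f g. Proof. by []. Qed.

Lemma size_fps_inv_seq (f : fps) n : size (fps_inv_seq f n) = n.+1.
Proof. by elim: n => [|n IH] //=; rewrite size_rcons IH. Qed.

Lemma nth_fps_inv_seq (f : fps) n j :
  (j <= n)%N -> nth 0 (fps_inv_seq f n) j = fps_inv f j.
Proof.
elim: n => [|n IH]; first by rewrite leqn0 => /eqP ->.
rewrite leq_eqVlt => /orP [/eqP -> //|ltjn].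
by rewrite /= nth_rcons size_fps_inv_seq ltjn IH.
Qed.

Lemma fps_invS (f : fps) n :
  fps_inv f n.+1 = - (f 0%N)^-1 * \sum_(i < n.+1) f i.+1 * fps_inv f (n - i)%N.
Proof.
rewrite {1}/fps_inv /= nth_rcons size_fps_inv_seq ltnn eqxx big_add1 /= big_mkord.
by congr (_ * _); apply: eq_bigr => i _; rewrite subSS nth_fps_inv_seq // leq_subr.
Qed.

Lemma fps_mulV (f : fps) : f 0%N != 0 -> fps_mul f (fps_inv f) = fps_one.
Proof.
move=> f0; apply: funext => -[|n]; first by rewrite /fps_mul big_ord1 mulfV.
rewrite /fps_mul big_ord_recl subn0 fps_invS mulrA mulrN mulfV // mulN1r /fps_one.
by rewrite (eq_bigr (fun i : 'I_n.+1 => f i.+1 * fps_inv f (n - i)%N)) ?addNr.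
Qed.

Definition fps_unit : {pred fps} := [pred f : fps | f 0%N != 0].
Definition fps_invr (f : fps) : fps := if f 0%N != 0 then fps_inv f else f.

Lemma fps_mulVr : {in fps_unit, left_inverse 1 fps_invr *%R}.
Proof. by move=> f; rewrite inE /fps_invr => /= f0; rewrite f0 mulrC; apply: fps_mulV. Qed.

Lemma fps_unitPl (f g : fps) : g * f = 1 -> fps_unit f.
Proof.
move/(congr1 (fun h : fps => h 0%N)); rewrite fps_mulE /fps_mul big_ord1 /= subnn.
by apply: contraPneq => ->; rewrite mulr0 /fps_one /= => /esym/eqP; rewrite oner_eq0.
Qed.

Lemma fps_invr_out : {in [predC fps_unit], fps_invr =1 id}.
Proof. by move=> f; rewrite inE /= inE /= /fps_invr => /negbTE ->. Qed.

HB.instance Definition _ :=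
  GRing.ComNzRing_hasMulInverse.Build fps fps_mulVr fps_unitPl fps_invr_out.

Lemma fps_unitE (f : fps) : (f \is a GRing.unit) = (f 0%N != 0).
Proof. by []. Qed.

Lemma fps_invE (f : fps) : f \is a GRing.unit -> f^-1 = fps_inv f.
Proof. by rewrite fps_unitE /GRing.inv /= /fps_invr => ->. Qed.

Lemma coef_XnM e (f : fps) n :
  (fps_Xn e * f) n = if (e <= n)%N then f (n - e)%N else 0.
Proof.
rewrite fps_mulE /fps_mul; case: leqP => [len|ltne].
  rewrite (bigD1 (Ordinal (len : e < n.+1)%N)) //= /fps_Xn eqxx mul1r big1 ?addr0 //.
  by move=> i /eqP nei; rewrite ifF ?mul0r //; apply/eqP => ie; apply: nei; apply: val_inj.
rewrite big1 // => i _; rewrite /fps_Xn ifF ?mul0r //.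
by apply/eqP => ie; move: ltne; rewrite -ie ltnNge -ltnS ltn_ord.
Qed.

Lemma fps_XnD a b : fps_Xn a * fps_Xn b = fps_Xn (a + b).
Proof.
apply: funext => n; rewrite coef_XnM /fps_Xn; case: leqP => leqan.
  by congr (if _ then _ else _); apply/eqP/eqP; lia.
by rewrite ifF //; apply/eqP; lia.
Qed.

Lemma fps_Xn0 : fps_Xn 0 = 1.
Proof. by []. Qed.

Lemma fps_prodE (s : seq fps) : fps_prod s = \prod_(f <- s) f.
Proof. by elim: s => [|f s IH]; rewrite ?big_nil ?big_cons //= IH. Qed.

Lemma fps_powE (f : fps) e : fps_pow f e = f ^+ e.
Proof. by elim: e => [|e IH] //=; rewrite IH exprSr. Qed.

Lemma unit_1subXn e : 1 - fps_Xn e.+1 \is a GRing.unit.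
Proof. by []. Qed.

Lemma qpochE i : qpoch i = \prod_(j < i) (1 - fps_Xn j.+1).
Proof. by rewrite /qpoch fps_prodE big_map -val_enum_ord big_map enumT. Qed.

Lemma qpoch0 : qpoch 0 = 1.
Proof. by rewrite qpochE big_ord0. Qed.

Lemma qpochS i : qpoch i.+1 = qpoch i * (1 - fps_Xn i.+1).
Proof. by rewrite !qpochE big_ord_recr. Qed.

Lemma qpoch_unit i : qpoch i \is a GRing.unit.
Proof. by rewrite qpochE; apply/unitr_prod => j _; apply: unit_1subXn. Qed.

Lemma qpochVS i : (qpoch i.+1)^-1 * (1 - fps_Xn i.+1) = (qpoch i)^-1.
Proof. by rewrite qpochS invrM ?qpoch_unit ?unit_1subXn // mulrAC mulVr ?mul1r. Qed.

Lemma coef_qpoch_stable n m : (n <= m)%N -> qpoch m n = qpoch n n.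
Proof.
elim: m => [|m IH]; first by rewrite leqn0 => /eqP ->.
rewrite leq_eqVlt => /orP [/eqP -> //|ltnm1].
rewrite qpochS mulrBr mulr1 fps_coefD fps_coefN mulrC coef_XnM.
by rewrite ifF ?subr0 ?IH //; apply/negbTE; rewrite -ltnNge.
Qed.

(** * Agreement of coefficients up to a given order *)

Definition eq_upto n (f g : fps) := forall j, (j <= n)%N -> f j = g j.

Lemma eq_upto_refl n (f : fps) : eq_upto n f f.
Proof. by []. Qed.

Lemma eq_upto_trans n (f g h : fps) : eq_upto n f g -> eq_upto n g h -> eq_upto n f h.
Proof. by move=> efg egh j lejn; rewrite efg ?egh. Qed.

Lemma eq_uptoD n (f f' g g' : fps) :
  eq_upto n f f' -> eq_upto n g g' -> eq_upto n (f + g) (f' + g').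
Proof. by move=> ef eg j lejn; rewrite !fps_coefD ef ?eg. Qed.

Lemma eq_upto_sum n I (r : seq I) (P : pred I) (F G : I -> fps) :
  (forall i, P i -> eq_upto n (F i) (G i)) ->
  eq_upto n (\sum_(i <- r | P i) F i) (\sum_(i <- r | P i) G i).
Proof. by move=> eFG j lejn; rewrite !fps_coef_sum; apply: eq_bigr => i /eFG->. Qed.

Lemma eq_uptoM n (f f' g g' : fps) :
  eq_upto n f f' -> eq_upto n g g' -> eq_upto n (f * g) (f' * g').
Proof.
move=> ef eg j lejn; rewrite !fps_mulE /fps_mul; apply: eq_bigr => i _.
have := ltn_ord i => ltij; rewrite ef ?eg //; lia.
Qed.

Lemma eq_upto_XnM n e (f : fps) : (n < e)%N -> eq_upto n (fps_Xn e * f) 0.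
Proof.
move=> ltne j lejn; rewrite coef_XnM fps_coef0 ifF //.
by apply/negbTE; rewrite -ltnNge (leq_ltn_trans lejn).
Qed.

Lemma eq_upto_sum_ord n b m (F : nat -> fps) : (b <= m)%N ->
  (forall x, (b <= x < m)%N -> eq_upto n (F x) 0) ->
  eq_upto n (\sum_(x < m) F x) (\sum_(x < b) F x).
Proof.
move=> lebm F0; rewrite -!(big_mkord xpredT) (big_cat_nat (n := b)) //=.
rewrite -[X in eq_upto _ _ X]addr0; apply: eq_uptoD => [//|].
rewrite big_seq; apply: (@eq_upto_trans _ _ (\sum_(b <= x < m | x \in index_iota b m) 0)).
  by apply: eq_upto_sum => x; rewrite mem_index_iota; apply: F0.
by rewrite big1.
Qed.

(** * Two identities for q-Pochhammer symbols *)

Lemma sum_Xn_qpochV L : \sum_(m < L.+1) fps_Xn m * (qpoch m)^-1 = (qpoch L)^-1.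
Proof.
elim: L => [|L IH]; first by rewrite big_ord1 fps_Xn0 qpoch0 mul1r.
by rewrite big_ord_recr /= IH -(qpochVS L); ring.
Qed.

Definition durfee_sum n a : fps := \sum_(m < n.+1)
  fps_Xn (m * m + a * m) * (qpoch m)^-1 * (qpoch (a + m))^-1 * (qpoch (n - m))^-1.

Lemma durfee_sumS n a : durfee_sum n.+1 a * (1 - fps_Xn n.+1) = durfee_sum n a.+1.
Proof.
pose T (m : nat) : fps :=
  fps_Xn (m * m + a * m) * (qpoch m)^-1 * (qpoch (a + m))^-1 * (qpoch (n.+1 - m))^-1.
(* In the m-th term split 1 - q^(n+1) as (1 - q^m) + q^m (1 - q^(n+1-m)). *)
transitivity (\sum_(m < n.+2) (T m * (1 - fps_Xn m)
                             + T m * (fps_Xn m * (1 - fps_Xn (n.+1 - m))))).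
  rewrite /durfee_sum mulr_suml; apply: eq_bigr => m _; have := ltn_ord m => ltmn.
  have -> : fps_Xn n.+1 = fps_Xn m * fps_Xn (n.+1 - m) by rewrite fps_XnD; congr fps_Xn; lia.
  by rewrite /T; ring.
rewrite big_split /= big_ord_recl [X in _ + X]big_ord_recr /= subnn fps_Xn0 !subrr.
rewrite !mulr0 add0r addr0 -big_split /=; apply: eq_bigr => i _.
have leiS : (i <= n)%N by rewrite -ltnS.
rewrite /T /bump /= add1n subSS (subSn leiS) addnS addSn.
have -> : fps_Xn (i.+1 * i.+1 + a * i.+1) = fps_Xn (i * i + a * i) * fps_Xn i * fps_Xn (a + i).+1.
  by rewrite !fps_XnD; congr fps_Xn; lia.
have -> : fps_Xn (i * i + a.+1 * i) = fps_Xn (i * i + a * i) * fps_Xn i.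
  by rewrite fps_XnD; congr fps_Xn; lia.
by rewrite -(qpochVS i) -(qpochVS (a + i)) -(qpochVS (n - i)); ring.
Qed.

Lemma durfee_sumE n a : durfee_sum n a = (qpoch n)^-1 * (qpoch (n + a))^-1.
Proof.
elim: n a => [|n IH] a.
  by rewrite /durfee_sum big_ord1 /= !(muln0, addn0, add0n) subnn fps_Xn0 qpoch0 invr1 !mul1r mulr1.
apply: (mulIr (unit_1subXn n)); rewrite durfee_sumS IH addSnnS -(qpochVS n) addnS; ring.
Qed.

(** * The shifted multisum *)

(* Index sequences are 1-based: [cons_index x i] puts [x] in position 1 and
   shifts [i] to the right; position 0 is never read. *)
Definition cons_index (x : nat) (i : nat -> nat) : nat -> nat :=
  fun j => if (j <= 1)%N then x else i j.-1.

Definition psum (i : nat -> nat) (j : nat) : nat := (\sum_(1 <= s < j.+1) i s)%N.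

Definition multisum_exp k a (i : nat -> nat) : nat :=
  (\sum_(1 <= j < k.+1) i j * (1 + a + psum i j))%N.

Definition multisum_den k a (i : nat -> nat) : fps :=
  \prod_(1 <= j < k.+1) (qpoch (i j) * qpoch (a + psum i j)).

Definition multisum_term k a (i : nat -> nat) : fps :=
  fps_Xn (multisum_exp k a i) * (multisum_den k a i)^-1.

Lemma cons_indexS x i j : (0 < j)%N -> cons_index x i j.+1 = i j.
Proof. by move=> lt0j; rewrite /cons_index ltnS leqNgt lt0j. Qed.

Lemma psum0 i : psum i 0 = 0%N.
Proof. by rewrite /psum big_geq. Qed.

Lemma psum_cons x i j : psum (cons_index x i) j.+1 = (x + psum i j)%N.
Proof.
rewrite /psum big_ltn // big_add1; congr (_ + _)%N.
by apply: eq_big_nat => s /andP [lt0s _]; rewrite cons_indexS.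
Qed.

Lemma multisum_exp_cons k a x i : multisum_exp k.+1 a (cons_index x i) =
  (x * (1 + a + x) + multisum_exp k (a + x) i)%N.
Proof.
rewrite /multisum_exp big_ltn // big_add1 psum_cons psum0 addn0; congr (_ + _)%N.
by apply: eq_big_nat => j /andP [lt0j _]; rewrite psum_cons cons_indexS // addnA.
Qed.

Lemma multisum_den_cons k a x i : multisum_den k.+1 a (cons_index x i) =
  qpoch x * qpoch (a + x) * multisum_den k (a + x) i.
Proof.
rewrite /multisum_den big_ltn // big_add1 psum_cons psum0 addn0; congr (_ * _).
by apply: eq_big_nat => j /andP [lt0j _]; rewrite psum_cons cons_indexS // addnA.
Qed.

Lemma multisum_den_unit k a i : multisum_den k a i \is a GRing.unit.
Proof. by apply/unitr_prod => j _; rewrite unitrM !qpoch_unit. Qed.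

Lemma multisum_term0 a i : multisum_term 0 a i = 1.
Proof. by rewrite /multisum_term /multisum_exp /multisum_den !big_geq // fps_Xn0 invr1 mulr1. Qed.

Lemma multisum_term_cons k a x i : multisum_term k.+1 a (cons_index x i) =
  fps_Xn (x * (1 + a + x)) * (qpoch x)^-1 * (qpoch (a + x))^-1 * multisum_term k (a + x) i.
Proof.
rewrite /multisum_term multisum_exp_cons multisum_den_cons -fps_XnD.
by rewrite !invrM ?unitrM ?qpoch_unit ?multisum_den_unit //; ring.
Qed.

Lemma leq_multisum_exp k a i j : (1 <= j <= k)%N -> (i j <= multisum_exp k a i)%N.
Proof.
move=> /andP [le1j lejk]; rewrite /multisum_exp (bigD1_seq j) ?iota_uniq //=.
  by apply: leq_trans (leq_addr _ _); rewrite leq_pmulr // addnAC addn1.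
by rewrite mem_index_iota le1j ltnS.
Qed.

Lemma psumS i j : psum i j.+1 = (psum i j + i j.+1)%N.
Proof. by rewrite /psum big_nat_recr. Qed.

Lemma rhs_expS k i : rhs_exp k.+1 i = (rhs_exp k i + i k.+1 * (1 + i k.+1 + psum i k))%N.
Proof.
have cross_split : (\sum_(2 <= s < k.+2) \sum_(s <= j < k.+2) i s.-1 * i j =
    \sum_(2 <= s < k.+1) \sum_(s <= j < k.+1) i s.-1 * i j + i k.+1 * psum i k)%N.
  rewrite (@eq_big_nat _ _ _ 2 k.+2 _
    (fun s => \sum_(s <= j < k.+1) i s.-1 * i j + i s.-1 * i k.+1)%N); last first.
    by move=> s /andP [_ lesk]; rewrite big_nat_recr.
  rewrite big_split /=; congr (_ + _)%N.
    case: k => [|k]; first by rewrite !big_geq.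
    by rewrite [LHS]big_nat_recr //= [X in (_ + X)%N]big_geq // addn0.
  by rewrite -[2%N]/(1.+1) big_add1 /= /psum big_distrr /=; apply: eq_bigr => s _; rewrite mulnC.
by rewrite /rhs_exp big_nat_recr //= cross_split; lia.
Qed.

Lemma rhs_expE k i : rhs_exp k i = multisum_exp k 0 i.
Proof.
elim: k => [|k IH]; first by rewrite /rhs_exp /multisum_exp !big_geq.
by rewrite rhs_expS IH /multisum_exp [in RHS]big_nat_recr //= psumS; lia.
Qed.

Lemma rhs_termE k i : rhs_term k i = multisum_term k 0 i.
Proof.
rewrite /rhs_term /multisum_term rhs_expE fps_invE ?multisum_den_unit //.
by rewrite fps_prodE big_map /multisum_den /index_iota subn1.
Qed.

Fixpoint box_sum (k m : nat) (g : (nat -> nat) -> fps) : fps :=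
  if k is k'.+1 then \sum_(x < m) box_sum k' m (fun i => g (cons_index x i))
  else g (fun _ => 0%N).

Definition ffun_cons k m (p : 'I_m * {ffun 'I_k -> 'I_m}) : {ffun 'I_k.+1 -> 'I_m} :=
  [ffun j => if unlift ord0 j is Some j' then p.2 j' else p.1].

Lemma ffun_cons_bij k m : bijective (@ffun_cons k m).
Proof.
exists (fun t : {ffun 'I_k.+1 -> 'I_m} => (t ord0, [ffun j => t (lift ord0 j)])).
  move=> [x t]; rewrite /ffun_cons /= !ffunE unlift_none; congr pair.
  by apply/ffunP => j; rewrite !ffunE liftK.
move=> t; apply/ffunP => j; rewrite /ffun_cons ffunE /=.
by case: unliftP => [j'|] -> /=; rewrite ?ffunE.
Qed.

Lemma of_ffun_cons k m x (t : {ffun 'I_k -> 'I_m}) :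
  of_ffun (ffun_cons (x, t)) = cons_index x (of_ffun t).
Proof.
apply: funext => j; rewrite /of_ffun /cons_index enum_ordSl /= ffunE unlift_none /=.
rewrite -map_comp (@eq_map _ _ _ (val \o t)) => [|y /=]; last by rewrite ffunE liftK.
by case: j => [|[|j]].
Qed.

Lemma box_sumE k m (g : (nat -> nat) -> fps) :
  \sum_(t : {ffun 'I_k -> 'I_m}) g (of_ffun t) = box_sum k m g.
Proof.
elim: k g => [|k IH] g /=.
  rewrite (eq_bigr (fun _ => g (fun _ => 0%N))) ?sumr_const ?card_ffun ?card_ord //.
  by move=> t _; congr g; apply: funext => j; rewrite /of_ffun enum_ord0 nth_nil.
rewrite (reindex (@ffun_cons k m)) /=; last exact/onW_bij/ffun_cons_bij.
rewrite -(pair_big xpredT xpredT (fun x t => g (of_ffun (ffun_cons (x, t))))) /=.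
by apply: eq_bigr => x _; rewrite -IH; apply: eq_bigr => t _; rewrite of_ffun_cons.
Qed.

Lemma box_sum_mull k m c (g : (nat -> nat) -> fps) :
  box_sum k m (fun i => c * g i) = c * box_sum k m g.
Proof.
elim: k g => [|k IH] g //=; rewrite mulr_sumr.
by apply: eq_bigr => x _; apply: IH.
Qed.

Lemma box_sum_eq_upto0 n k m (g : (nat -> nat) -> fps) :
  (forall i, eq_upto n (g i) 0) -> eq_upto n (box_sum k m g) 0.
Proof.
elim: k g => [|k IH] g g0 //=.
apply: (@eq_upto_trans _ _ (\sum_(x < m) 0)); last by rewrite big1.
by apply: eq_upto_sum => x _; apply: IH.
Qed.

Lemma box_sum_truncate n k m (g : (nat -> nat) -> fps) : (n < m)%N ->
  (forall i j, (1 <= j <= k)%N -> (n < i j)%N -> eq_upto n (g i) 0) ->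
  eq_upto n (box_sum k m g) (box_sum k n.+1 g).
Proof.
move=> ltnm; elim: k g => [//|k IH] g g0 /=.
apply: (@eq_upto_trans _ _ (\sum_(x < n.+1) box_sum k m (fun i => g (cons_index x i)))).
  apply: (eq_upto_sum_ord (F := fun x => box_sum k m (fun i => g (cons_index x i)))) => // x.
  by move=> /andP [ltnx _]; apply: box_sum_eq_upto0 => i; apply: (g0 _ 1%N).
apply: eq_upto_sum => x _; apply: IH => i j /andP [le1j lejk] ltnij.
by apply: (g0 _ j.+1); rewrite ?cons_indexS // ltnS le1j.
Qed.

Definition lhs_sum k a L : fps :=
  \sum_(n < L.+1) fps_Xn n * (qpoch n)^-1 * (qpoch (n + a))^-1 ^+ k.

Lemma lhs_sumS k a L : eq_upto L
  (\sum_(x < L.+1) fps_Xn (x * (1 + a + x)) * (qpoch x)^-1 * (qpoch (a + x))^-1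
                   * lhs_sum k (a + x) L)
  (lhs_sum k.+1 a L).
Proof.
pose h x l := fps_Xn (x * (1 + a + x) + l) * ((qpoch x)^-1 * (qpoch (a + x))^-1
                * ((qpoch l)^-1 * (qpoch (l + (a + x)))^-1 ^+ k)).
have diag N : \sum_(x < N.+1) h x (N - x)%N =
              fps_Xn N * (qpoch N)^-1 * (qpoch (N + a))^-1 ^+ k.+1.
  have -> : fps_Xn N * (qpoch N)^-1 * (qpoch (N + a))^-1 ^+ k.+1 =
            fps_Xn N * (qpoch (N + a))^-1 ^+ k * durfee_sum N a.
    by rewrite durfee_sumE exprSr; ring.
  rewrite /durfee_sum mulr_sumr; apply: eq_bigr => x _; have := ltn_ord x => ltxN.
  rewrite /h (_ : N - x + (a + x) = N + a)%N; last by lia.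
  rewrite (_ : x * (1 + a + x) + (N - x) = N + (x * x + a * x))%N; last by lia.
  by rewrite -fps_XnD; ring.
apply: (@eq_upto_trans _ _ (\sum_(x < L.+1) \sum_(l < (L - x).+1) h x l)).
  apply: eq_upto_sum => x _; rewrite /lhs_sum !mulr_sumr.
  rewrite (eq_bigr (fun l : 'I_L.+1 => h x l)) => [|l _]; last by rewrite /h -fps_XnD; ring.
  apply: eq_upto_sum_ord => [|l /andP [ltl _]]; first by rewrite ltnS leq_subr.
  apply: eq_upto_XnM; have := ltn_ord x; have : (x <= x * (1 + a + x))%N.
    by rewrite leq_pmulr // addnC addn1.
  lia.
by rewrite -sum_antidiagonal /lhs_sum; under eq_bigr do rewrite diag.
Qed.

Lemma box_sum_multisum_term k a L :
  eq_upto L (box_sum k L.+1 (multisum_term k a)) (qpoch L * lhs_sum k a L).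
Proof.
elim: k a => [|k IH] a.
  rewrite /= multisum_term0 /lhs_sum.
  by under eq_bigr do rewrite expr0 mulr1; rewrite sum_Xn_qpochV mulrV ?qpoch_unit.
have cons_term x : (fun i => multisum_term k.+1 a (cons_index x i)) = (fun i =>
    fps_Xn (x * (1 + a + x)) * (qpoch x)^-1 * (qpoch (a + x))^-1 * multisum_term k (a + x) i).
  by apply: funext => i; apply: multisum_term_cons.
rewrite /=; under eq_bigr => x _ do rewrite cons_term box_sum_mull.
pose c (x : nat) : fps := fps_Xn (x * (1 + a + x)) * (qpoch x)^-1 * (qpoch (a + x))^-1.
apply: (@eq_upto_trans _ _ (\sum_(x < L.+1) c x * (qpoch L * lhs_sum k (a + x) L))).
  by apply: eq_upto_sum => x _; apply: eq_uptoM (eq_upto_refl _) (IH (a + x)).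
rewrite (_ : \sum_(x < _) _ = qpoch L * \sum_(x < L.+1) c x * lhs_sum k (a + x) L).
  by apply: eq_uptoM (eq_upto_refl _) _; rewrite /c; apply: lhs_sumS.
by rewrite mulr_sumr; apply: eq_bigr => x _; ring.
Qed.

(** * Coefficientwise limits *)

Definition coef_stable (u : nat -> fps) := forall n m, (n < m)%N -> eq_upto n (u m) (u n.+1).

Lemma fps_lim_stable u : coef_stable u -> fps_lim u (fun n => u n.+1 n).
Proof. by move=> su n; exists n.+1 => m ltnm; apply: su. Qed.

Lemma eq_upto_lim_stable u n : coef_stable u -> eq_upto n (fun j => u j.+1 j) (u n.+1).
Proof. by move=> su j lejn; rewrite (su j n.+1). Qed.

Lemma lhs_termE k i : lhs_term k i = fps_Xn i * (qpoch i)^-1 ^+ k.+1.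
Proof. by rewrite /lhs_term fps_powE -fps_mulE -fps_invE ?unitrX ?qpoch_unit ?exprVn. Qed.

Lemma coef_stable_lhs k : coef_stable (fun m => \sum_(i < m) lhs_term k i).
Proof. by move=> n m ltnm; apply: eq_upto_sum_ord => // i /andP [ltni _]; apply: eq_upto_XnM. Qed.

Lemma coef_stable_rhs k : coef_stable (fun m => box_sum k m (multisum_term k 0)).
Proof.
move=> n m ltnm; apply: box_sum_truncate => // i j lejk ltnij.
exact/eq_upto_XnM/(leq_trans ltnij)/leq_multisum_exp.
Qed.

Theorem mainTheorem4 (k : nat) (hk : (1 <= k)%N) :
  exists P S T : fps,
    (* P = (q;q)_oo, limit of the partial products (q;q)_m *)
    fps_lim (fun m => qpoch m) P /\
    (* S = sum_{i>=0} q^i / (q;q)_i^(k+1) *)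
    fps_lim (fun m n => \sum_(i < m) lhs_term k i n) S /\
    (* T = the k-fold sum over i_1,...,i_k >= 0 (limit of box partial sums) *)
    fps_lim (fun m n => \sum_(t : {ffun 'I_k -> 'I_m}) rhs_term k (of_ffun t) n) T /\
    fps_mul P S = T.
Proof.
(* The identity holds for k = 0 as well. *)
pose lhs m := \sum_(i < m) lhs_term k i.
pose rhs m := box_sum k m (multisum_term k 0).
have -> : (fun m n => \sum_(i < m) lhs_term k i n) = lhs.
  by apply: funext => m; apply: funext => n; rewrite /lhs fps_coef_sum.
have -> : (fun m n => \sum_(t : {ffun 'I_k -> 'I_m}) rhs_term k (of_ffun t) n) = rhs.
  apply: funext => m; apply: funext => n; rewrite /rhs -box_sumE fps_coef_sum.
  by under eq_bigr do rewrite rhs_termE.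
exists (fun n => qpoch n n), (fun n => lhs n.+1 n), (fun n => rhs n.+1 n).
split; first by move=> n; exists n => m; apply: coef_qpoch_stable.
split; first exact: fps_lim_stable (coef_stable_lhs k).
split; first exact: fps_lim_stable (coef_stable_rhs k).
apply: funext => n; rewrite -fps_mulE.
have eP : eq_upto n (fun j => qpoch j j) (qpoch n).
  by move=> j lejn; rewrite coef_qpoch_stable.
have eS : eq_upto n (fun j => lhs j.+1 j) (lhs_sum k 0 n).
  apply: eq_upto_trans (eq_upto_lim_stable (coef_stable_lhs k)) _.
  rewrite (_ : \sum_(i < n.+1) lhs_term k i = lhs_sum k 0 n) //.
  by apply: eq_bigr => i _; rewrite lhs_termE addn0 exprS mulrA.
have eT : eq_upto n (fun j => rhs j.+1 j) (qpoch n * lhs_sum k 0 n).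
  exact: eq_upto_trans (eq_upto_lim_stable (coef_stable_rhs k))
                       (@box_sum_multisum_term k 0 n).
by rewrite (eq_uptoM eP eS) // -eT.
Qed.
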